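(* Let $X_1,\ldots,X_n$ be non-empty sets, $\Omega=X_1\times\cdots\times X_n$, and let $S\subset\Omega$ be a good set with related components $\{R_\alpha\}$. For each $i$, let $E_i$ be the equivalence relation on $\Pi_iS$ defined by: $x_iE_iy_i$ iff there is a finite sequence of related components $R_1,\ldots,R_m$ of $S$ with $x_i\in\Pi_iR_1$, $y_i\in\Pi_iR_m$ and $\Pi_iR_j\cap\Pi_iR_{j+1}\neq\emptyset$ for $1\le j\le m-1$. Let $[x_i]$ denote the $E_i$-class of $x_i$ and $\mathcal F_i$ the set of $E_i$-classes. Let $C\subset S$ be a cross-section of the related components (i.e. $C$ contains exactly one point of each $R_\alpha$), and define $\phi:C\to\mathcal F_1\times\cdots\times\mathcal F_n$ by $\phi(x_1,\ldots,x_n)=([x_1],\ldots,[x_n])$. Then $\phi(C)$ is a good subset of $\mathcal F_1\times\cdots\times\mathcal F_n$, and $S$ is full if and only if $\phi(C)$ is full.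
   Context: For a product $Y_1\times\cdots\times Y_n$ of non-empty sets, $\Pi_i$ denotes the canonical projection onto $Y_i$. A subset $T$ of such a product is good if every complex-valued function $f$ on $T$ can be written as $f(y_1,\ldots,y_n)=u_1(y_1)+\cdots+u_n(y_n)$ on $T$ for suitable complex-valued functions $u_i$ on $Y_i$. $T$ is full if it is a maximal good subset of $\Pi_1T\times\cdots\times\Pi_nT$. For a good set $S$, two points of $S$ are related if some finite full subset of $S$ contains both; this is an equivalence relation whose classes are the related components of $S$. *)

From HB Require Import structures.
From mathcomp Require Import all_boot all_order all_algebra.
From mathcomp Require Import boolp classical_sets functions cardinality.
From mathcomp Require Import Rstruct.
From mathcomp Require Import complex.
Set Implicit Arguments. Unset Strict Implicit. Unset Printing Implicit Defensive.
Import GRing.Theory Num.Theory.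
Local Open Scope classical_set_scope.
Local Open Scope ring_scope.

Definition Cx : Type := complex Rdefinitions.R.

Definition prodT (n : nat) (Y : 'I_n -> Type) := forall i : 'I_n, Y i.

Definition proj (n : nat) (Y : 'I_n -> Type) (i : 'I_n) (T : set (prodT Y))
  : set (Y i) := [set y | exists t, T t /\ t i = y].
Arguments proj {n Y} i T _.

Definition good (n : nat) (Y : 'I_n -> Type) (T : set (prodT Y)) : Prop :=
  forall f : prodT Y -> Cx,
    exists u : forall i : 'I_n, Y i -> Cx,
      forall y, T y -> f y = \sum_(i < n) u i (y i).

Definition box (n : nat) (Y : 'I_n -> Type) (T : set (prodT Y)) : set (prodT Y) :=
  [set y | forall i, proj i T (y i)].

Definition full (n : nat) (Y : 'I_n -> Type) (T : set (prodT Y)) : Prop :=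
  good T /\
  forall T' : set (prodT Y), T `<=` T' -> T' `<=` box T -> good T' -> T' = T.

Definition related (n : nat) (Y : 'I_n -> Type) (S : set (prodT Y)) (x y : prodT Y)
  : Prop :=
  exists F : set (prodT Y), [/\ finite_set F, full F, F `<=` S, F x & F y].

Definition related_component (n : nat) (Y : 'I_n -> Type) (S : set (prodT Y))
  (R : set (prodT Y)) : Prop :=
  exists x, S x /\ R = [set y | related S x y].

Definition E (n : nat) (Y : 'I_n -> Type) (S : set (prodT Y)) (i : 'I_n)
  (a b : Y i) : Prop :=
  exists (m : nat) (Rs : nat -> set (prodT Y)),
    [/\ (forall j, (j <= m)%N -> related_component S (Rs j)),
        proj i (Rs 0%N) a, proj i (Rs m) b &
        (forall j, (j < m)%N -> proj i (Rs j) `&` proj i (Rs j.+1) !=set0)].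
Arguments E {n Y} S i a b.

Definition Eclass (n : nat) (Y : 'I_n -> Type) (S : set (prodT Y)) (i : 'I_n)
  (a : Y i) : set (Y i) := [set b | E S i a b].
Arguments Eclass {n Y} S i a _.

Definition Fcl (n : nat) (Y : 'I_n -> Type) (S : set (prodT Y)) (i : 'I_n) : Type :=
  {A : set (Y i) | exists a, proj i S a /\ A = Eclass S i a}.

Definition cross_section (n : nat) (Y : 'I_n -> Type) (S : set (prodT Y))
  (C : set (prodT Y)) : Prop :=
  C `<=` S /\
  forall R, related_component S R -> exists! c, C c /\ R c.

Definition phiC (n : nat) (Y : 'I_n -> Type) (S : set (prodT Y)) (C : set (prodT Y))
  : set (prodT (Fcl S)) :=
  [set z | exists c, C c /\ forall i, proj1_sig (z i) = Eclass S i (c i)].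
Arguments phiC {n Y} S C _.
Arguments Fcl {n Y} S i.

From mathcomp Require Import all_boot classical_sets.
From mathcomp Require Import all_algebra boolp Rstruct complex.
From mathcomp Require Import zify.
Set Implicit Arguments. Unset Strict Implicit. Unset Printing Implicit Defensive.
Import GRing.Theory.
Local Open Scope classical_set_scope.
Local Open Scope ring_scope.

(* A good set T is full iff it is rigid: whenever sum_i u_i(y_i) vanishes on
   T, each u_i is constant on Pi_i T.  Otherwise a point of the box of T at
   which this sum is nonzero could be adjoined to T keeping it good;
   conversely, writing the indicator of a point p of the box outside T as a
   sum on T + {p} gives a sum vanishing on T but not at p.  Applied to the
   finite full subsets of S, rigidity makes each u_i constant on E_i-classes
   as soon as sum_i u_i(y_i) takes equal values at related points.  So
   separable functions on S and on phi(C) correspond to each other, which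
   transfers goodness from S to phi(C) and rigidity in both directions. *)

Section Rigidity.
Variables (n : nat) (Y : 'I_n -> Type).
Implicit Types (T F : set (prodT Y)) (u : forall i, Y i -> Cx).

Definition sepsum u (y : prodT Y) : Cx := \sum_(i < n) u i (y i).

Definition rigid T := forall u, (forall y, T y -> sepsum u y = 0) ->
  forall i a b, proj i T a -> proj i T b -> u i a = u i b.

Lemma sepsum_dfwith u (t : prodT Y) i (b : Y i) :
  sepsum u (dfwith t b) = sepsum u t + (u i b - u i (t i)).
Proof.
rewrite /sepsum (bigD1 i) //= [in RHS](bigD1 i) //= dfwith_in.
under eq_bigr => j ji do rewrite dfwith_out 1?eq_sym //.
by rewrite addrAC (addrC (u i (t i))) subrK.
Qed.

Lemma dfwith_box F t i (b : Y i) : F t -> proj i F b -> box F (dfwith t b).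
Proof.
move=> Ft Fb j; case: (eqVneq i j) => [<-|ij]; first by rewrite dfwith_in.
by rewrite dfwith_out //; exists t.
Qed.

Lemma good_setU1 F (p : prodT Y) u :
  good F -> (forall y, F y -> sepsum u y = 0) -> sepsum u p != 0 ->
  good (F `|` [set p]).
Proof.
move=> gF u0 up f; have [w hw] := gF f.
pose lam := (f p - sepsum w p) / sepsum u p.
exists (fun i x => w i x + lam * u i x) => y Fpy.
rewrite big_split /= -mulr_sumr -!/(sepsum _ y).
case: Fpy => [Fy|->]; first by rewrite u0 // mulr0 addr0 hw.
by rewrite /lam mulfVK // addrC subrK.
Qed.

Lemma full_coord_const F u k i a b : full F ->
  (forall y, F y -> sepsum u y = k) -> proj i F a -> proj i F b -> u i a = u i b.
Proof.
move=> [gF maxF] uk.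
suff coord_eq t c : F t -> proj i F c -> u i (t i) = u i c.
  by case=> t [Ft <-] Fb; exact: coord_eq.
move=> Ft Fc; apply: contrapT => neq.
pose p := dfwith t c.
pose z j x := u j x - (if j == i then k else 0).
have sepsum_z y : sepsum z y = sepsum u y - k.
  by rewrite /sepsum sumrB -big_mkcond big_pred1_eq.
have zp_neq0 : sepsum z p != 0.
  rewrite sepsum_z sepsum_dfwith uk // addrC addKr subr_eq0.
  by apply/eqP => e; apply: neq.
have gFp : good (F `|` [set p]).
  by apply: (good_setU1 gF _ zp_neq0) => y Fy; rewrite sepsum_z uk ?subrr.
have Fp : F p.
  rewrite -(maxF _ (@subsetUl _ F [set p]) _ gFp); first by right.
  by move=> y [Fy j|->]; [exists y | exact: dfwith_box].
by move: zp_neq0; rewrite sepsum_z uk // subrr eqxx.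
Qed.

Lemma rigid_sepsum_box F u : rigid F -> (forall y, F y -> sepsum u y = 0) ->
  forall p, box F p -> sepsum u p = 0.
Proof.
move=> rF u0 p Fp; have [[t Ft]|noF] := pselect (exists t, F t).
  rewrite -(u0 t Ft); apply: eq_bigr => i _.
  by apply: (rF u u0 i _ _ (Fp i)); exists t.
by apply: big1 => i _; have [t [Ft _]] := Fp i; case: noF; exists t.
Qed.

Lemma rigid_full F : good F -> rigid F -> full F.
Proof.
move=> gF rF; split=> // T' FT' T'F gT'.
apply/seteqP; split=> // p T'p; apply: contrapT => nFp.
have [u hu] := gT' (fun y => if pselect (y = p) then 1 else 0).
have u0 y : F y -> sepsum u y = 0.
  move=> Fy; rewrite /sepsum -hu; last exact: FT'.
  by case: pselect => // e; subst.
have := hu p T'p; case: pselect => // pp.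
rewrite -/(sepsum u p) (rigid_sepsum_box rF u0 (T'F p T'p)).
by move/eqP; rewrite oner_eq0.
Qed.

Lemma full_rigid F : full F -> rigid F.
Proof. by move=> fF u u0 i a b; apply: full_coord_const fF u0. Qed.

Lemma full_iff_rigid F : good F -> full F <-> rigid F.
Proof. by move=> gF; split; [exact: full_rigid | exact: rigid_full]. Qed.

End Rigidity.

Section RelatedComponents.
Variables (n : nat) (Y : 'I_n -> Type) (S : set (prodT Y)).
Implicit Types (x y : prodT Y) (u : forall i, Y i -> Cx).

Lemma related_in x y : related S x y -> S x /\ S y.
Proof. by case=> F [_ _ FS Fx Fy]; split; apply: FS. Qed.

Lemma related_refl_l x y : related S x y -> related S x x.
Proof. by case=> F [? ? ? Fx _]; exists F. Qed.

Lemma related_E i x y : related S x y -> E S i (x i) (y i).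
Proof.
move=> rxy; exists 0%N, (fun _ => [set z | related S x z]); split=> //.
- by move=> j _; exists x; split=> //; case: (related_in rxy).
- by exists x; split=> //; apply: related_refl_l rxy.
- by exists y.
Qed.

Lemma E_sym i a b : E S i a b -> E S i b a.
Proof.
case=> m [Rs [Rc Ra Rb Rlink]]; exists m, (fun j => Rs (m - j)%N); split.
- by move=> j jm; apply: Rc; rewrite leq_subr.
- by rewrite subn0.
- by rewrite subnn.
- move=> j jm; have [w [w1 w2]] := Rlink (m - j.+1)%N ltac:(lia).
  have e : (m - j.+1).+1 = (m - j)%N by lia.
  by exists w; split; rewrite -?e.
Qed.

Lemma E_trans i a b c : E S i a b -> E S i b c -> E S i a c.
Proof.
case=> m1 [R1 [R1c R1a R1b R1link]] [m2 [R2 [R2c R2b R2c' R2link]]].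
exists (m1 + m2).+1, (fun j => if (j <= m1)%N then R1 j else R2 (j - m1.+1)%N).
split=> [j jm /=||/=|j jm /=] //.
- by case: leqP => hj; [exact: R1c | apply: R2c; lia].
- by rewrite ltnNge leq_addr /= subSS addKn.
- case: (ltngtP j m1) => hj; first exact: R1link.
    by rewrite subSS -[(j - m1)%N]subnSK //; apply: R2link; lia.
  by subst j; rewrite subnn; exists b.
Qed.

Lemma Eclass_eq i a b : E S i a b -> Eclass S i a = Eclass S i b.
Proof.
move=> ab; apply/seteqP; split=> x /=; first exact: E_trans (E_sym ab).
exact: E_trans ab.
Qed.

Definition related_invariant u :=
  forall x y, related S x y -> sepsum u x = sepsum u y.

Lemma related_coord_eq u i x y :
  related_invariant u -> related S x y -> u i (x i) = u i (y i).
Proof.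
move=> hu [F [finF fF FS Fx Fy]].
apply: (full_coord_const (k := sepsum u x) fF).
- by move=> w Fw; rewrite (hu x w) //; exists F.
- by exists x.
- by exists y.
Qed.

Lemma E_coord_eq u i a b : related_invariant u -> E S i a b -> u i a = u i b.
Proof.
move=> hu [m [Rs [Rc Ra Rb Rlink]]].
have component_eq j w w' : (j <= m)%N ->
    proj i (Rs j) w -> proj i (Rs j) w' -> u i w = u i w'.
  move=> jm [y [Ry <-]] [y' [Ry' <-]]; have [x [_ eR]] := Rc j jm.
  move: Ry Ry'; rewrite eR => rxy rxy'.
  by rewrite -(related_coord_eq i hu rxy) -(related_coord_eq i hu rxy').
suff chain j w : (j <= m)%N -> proj i (Rs j) w -> u i a = u i w.
  exact: chain Rb.
elim: j w => [|j IH] w jm Rw; first exact: component_eq Ra Rw.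
have [w0 [Rw0 Rw0']] := Rlink j jm.
by rewrite (IH w0 (ltnW jm) Rw0); apply: component_eq Rw0' Rw.
Qed.

End RelatedComponents.

Section Classes.
Variables (n : nat) (Y : 'I_n -> Type) (S : set (prodT Y)).

Definition Fcl_of i (a : Y i) (Sa : proj i S a) : Fcl S i :=
  exist _ (Eclass S i a) (ex_intro _ a (conj Sa erefl)).

Lemma Fcl_inj i (A B : Fcl S i) : proj1_sig A = proj1_sig B -> A = B.
Proof.
case: A B => [A hA] [B hB] /= eAB; subst B.
by congr exist; apply: Prop_irrelevance.
Qed.

Definition Fcl_repr i (A : Fcl S i) : Y i := proj1_sig (cid (proj2_sig A)).

Lemma Fcl_reprP i (A : Fcl S i) :
  proj i S (Fcl_repr A) /\ proj1_sig A = Eclass S i (Fcl_repr A).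
Proof. exact: proj2_sig (cid (proj2_sig A)). Qed.

Lemma proj_in i s : S s -> proj i S (s i).
Proof. by exists s. Qed.

(* The paper's phi, extended from C to all of S. *)
Definition phi s (Ss : S s) : prodT (Fcl S) := fun i => Fcl_of (proj_in i Ss).

Lemma phiE s (Ss : S s) (z : prodT (Fcl S)) :
  (forall i, proj1_sig (z i) = Eclass S i (s i)) -> z = phi Ss.
Proof.
by move=> zs; apply: functional_extensionality_dep => i; exact: Fcl_inj.
Qed.

Variable C : set (prodT Y).
Hypothesis hC : cross_section S C.

Lemma cross_section_related s : S s -> exists2 c, C c & related S s c.
Proof.
move=> Ss; pose R := [set y | related S s y].
have [c [[Cc sc] _]] := hC.2 R (ex_intro _ s (conj Ss erefl)).
by exists c.
Qed.

Lemma E_refl i s : S s -> E S i (s i) (s i).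
Proof.
by case/cross_section_related=> c _ /related_refl_l; apply: related_E.
Qed.

Lemma Fcl_repr_E i (A : Fcl S i) c :
  S c -> proj1_sig A = Eclass S i (c i) -> E S i (Fcl_repr A) (c i).
Proof.
move=> Sc eA; have [_ eArepr] := Fcl_reprP A.
have cc : Eclass S i (c i) (c i) by exact: E_refl.
by move: cc; rewrite -eA eArepr.
Qed.

Lemma phi_in_phiC s (Ss : S s) : phiC S C (phi Ss).
Proof.
have [c Cc sc] := cross_section_related Ss; exists c; split=> // i.
exact/Eclass_eq/related_E.
Qed.

Lemma good_phiC : good S -> good (phiC S C).
Proof.
move=> gS g.
pose f y := if pselect (S y) is left Sy then g (phi Sy) else 0.
have fE y (Sy : S y) : f y = g (phi Sy).
  by rewrite /f; case: pselect => // Sy'; rewrite (Prop_irrelevance Sy' Sy).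
have [u hu] := gS f.
have u_inv : related_invariant S u.
  move=> x y rxy; have [Sx Sy] := related_in rxy.
  rewrite /sepsum -(hu x Sx) -(hu y Sy) (fE x Sx) (fE y Sy); congr g.
  by apply: phiE => i /=; apply/Eclass_eq/related_E.
exists (fun i A => u i (Fcl_repr A)) => z [c [Cc zc]]; have Sc := hC.1 c Cc.
under eq_bigr => i _ do rewrite (E_coord_eq u_inv (Fcl_repr_E Sc (zc i))).
by rewrite (phiE Sc zc) -fE hu.
Qed.

Lemma rigid_phiC : rigid S -> rigid (phiC S C).
Proof.
move=> rS v v0.
pose u i x := if pselect (proj i S x) is left Sx then v i (Fcl_of Sx) else 0.
have uE s (Ss : S s) i : u i (s i) = v i (phi Ss i).
  rewrite /u; case: pselect => [Ssi|/(_ (proj_in i Ss))//].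
  by congr (v i); exact: Fcl_inj.
have u0 s : S s -> sepsum u s = 0.
  move=> Ss; rewrite /sepsum (eq_bigr _ (fun i _ => uE s Ss i)).
  exact: v0 (phi_in_phiC Ss).
have v_of_u i A : proj i (phiC S C) A -> exists2 c, S c & v i A = u i (c i).
  case=> z [[c [Cc zc]] <-]; have Sc := hC.1 c Cc.
  by exists c => //; rewrite (uE c Sc) (phiE Sc zc).
move=> i A B /v_of_u[c Sc ->] /v_of_u[c' Sc' ->].
exact: rS u0 i _ _ (proj_in i Sc) (proj_in i Sc').
Qed.

Lemma rigid_of_phiC : rigid (phiC S C) -> rigid S.
Proof.
move=> rP u u0.
have u_inv : related_invariant S u.
  by move=> x y rxy; have [Sx Sy] := related_in rxy; rewrite !u0.
pose v i (A : Fcl S i) := u i (Fcl_repr A).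
have vE c (Sc : S c) i : v i (phi Sc i) = u i (c i).
  exact/(E_coord_eq u_inv)/Fcl_repr_E.
have v0 z : phiC S C z -> sepsum v z = 0.
  case=> c [Cc zc]; have Sc := hC.1 c Cc.
  rewrite (phiE Sc zc) /sepsum (eq_bigr _ (fun i _ => vE c Sc i)).
  exact: u0.
have u_of_v i s : S s -> exists2 z, phiC S C z & u i (s i) = v i (z i).
  move=> Ss; have [c Cc sc] := cross_section_related Ss; have Sc := hC.1 c Cc.
  exists (phi Sc); first by exists c.
  by rewrite vE; exact: E_coord_eq u_inv (related_E i sc).
move=> i _ _ [s [Ss <-]] [s' [Ss' <-]].
have [z Pz ->] := u_of_v i s Ss; have [z' Pz' ->] := u_of_v i s' Ss'.
by apply: (rP v v0 i); [exists z | exists z'].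
Qed.

End Classes.

Theorem lemma1 (n : nat) (X : 'I_n -> Type)
  (hX : forall i, inhabited (X i))
  (S : set (prodT X)) (hS : good S)
  (C : set (prodT X)) (hC : cross_section S C) :
  good (phiC S C) /\ (full S <-> full (phiC S C)).
Proof.
have gP := good_phiC hC hS.
split=> //; rewrite (full_iff_rigid hS) (full_iff_rigid gP).
by split; [exact: rigid_phiC | exact: rigid_of_phiC].
Qed.
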